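(* In the setting described in the context, let $\mathbf{r}_t,\mathbf{s}_t,\mathbf{L}_t$ be produced by the O-LSD iteration. Then: (1) the values $\hat\ell(\mathbf{d},\mathbf{L},\mathbf{r},\mathbf{s})$ and $\ell(\mathbf{d},\mathbf{L})$ (for data $\mathbf{d}$, iterates $\mathbf{L}=\mathbf{L}_t$ and the corresponding minimizers $\mathbf{r},\mathbf{s}$) are uniformly bounded; (2) the surrogate functions $g_t(\mathbf{L})$ are uniformly bounded and Lipschitz in $\mathbf{L}$.
   Context: Fix integers $p,r\ge 1$ and constants $\lambda_1,\lambda_2>0$. Let $\mathcal{G}$ be a finite collection of subsets of $\{1,\dots,p\}$. For $\mathbf{s}\in\mathbb{R}^p$ and $g\in\mathcal{G}$, let $\mathbf{s}_{|g}$ be the vector equal to $\mathbf{s}$ on indices in $g$ and zero elsewhere, and $\|\mathbf{s}\|_{\ell_1/\ell_\infty}=\sum_{g\in\mathcal{G}}\|\mathbf{s}_{|g}\|_\infty$. Define $\hat\ell(\mathbf{d},\mathbf{L},\mathbf{r},\mathbf{s})=\tfrac12\|\mathbf{d}-\mathbf{L}\mathbf{r}-\mathbf{s}\|_2^2+\tfrac{\lambda_1}{2}\|\mathbf{r}\|_2^2+\lambda_2\|\mathbf{s}\|_{\ell_1/\ell_\infty}$ and $\ell(\mathbf{d},\mathbf{L})=\min_{\mathbf{r},\mathbf{s}}\hat\ell(\mathbf{d},\mathbf{L},\mathbf{r},\mathbf{s})$. Data: $\mathbf{d}_1,\mathbf{d}_2,\dots\in\mathbb{R}^p$ independent and uniformly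 bounded (there is $M$ with $\|\mathbf{d}_t\|_2\le M$ for all $t$). O-LSD iteration: arbitrary $\mathbf{L}_0\in\mathbb{R}^{p\times r}$, $\mathbf{A}_0=\mathbf{0}$, $\mathbf{B}_0=\mathbf{0}$. For $t\ge1$: $(\mathbf{r}_t,\mathbf{s}_t)$ is a minimizer of $\hat\ell(\mathbf{d}_t,\mathbf{L}_{t-1},\cdot,\cdot)$; $\mathbf{A}_t=\mathbf{A}_{t-1}+\mathbf{r}_t\mathbf{r}_t^T$, $\mathbf{B}_t=\mathbf{B}_{t-1}+(\mathbf{d}_t-\mathbf{s}_t)\mathbf{r}_t^T$; $\mathbf{L}_t$ is the minimizer of the surrogate $g_t(\mathbf{L})=\frac1t\sum_{i=1}^t\hat\ell(\mathbf{d}_i,\mathbf{L},\mathbf{r}_i,\mathbf{s}_i)+\frac{\lambda_1}{2t}\|\mathbf{L}\|_F^2$, i.e. $\mathbf{L}_t=\mathbf{B}_t(\mathbf{A}_t+\lambda_1\mathbf{I})^{-1}$. The iterates $\mathbf{L}_t$ lie in a compact set $\mathcal{L}\subset\mathbb{R}^{p\times r}$, and ''uniformly bounded/Lipschitz'' means with constants independent of $t$, for $\mathbf{L}\in\mathcal{L}$. *)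

From HB Require Import structures.
From mathcomp Require Import all_boot all_order all_algebra.
From mathcomp Require Import all_classical all_reals all_analysis.
Set Implicit Arguments. Unset Strict Implicit. Unset Printing Implicit Defensive.
Import Order.TTheory GRing.Theory Num.Theory.
Import numFieldNormedType.Exports.
Local Open Scope ring_scope.
Local Open Scope classical_set_scope.

Section OLSD.
Variable R : realType.

Definition sqnorm2 n (x : 'cV[R]_n) : R := \sum_(i < n) (x i ord0) ^+ 2.

Definition frob m n (A : 'M[R]_(m, n)) : R :=
  Num.sqrt (\sum_(i < m) \sum_(j < n) (A i j) ^+ 2).

Definition restr p (g : {set 'I_p}) (s : 'cV[R]_p) : 'cV[R]_p :=
  \col_i (if i \in g then s i ord0 else 0).

Definition inftynorm n (x : 'cV[R]_n) : R := \big[Num.max/0]_(i < n) `|x i ord0|.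

Definition l1linf p (G : {set {set 'I_p}}) (s : 'cV[R]_p) : R :=
  \sum_(g in G) inftynorm (restr g s).

Definition lhat p k (lam1 lam2 : R) (G : {set {set 'I_p}})
  (d : 'cV[R]_p) (L : 'M[R]_(p, k)) (r : 'cV[R]_k) (s : 'cV[R]_p) : R :=
  2^-1 * sqnorm2 (d - L *m r - s) + lam1 / 2 * sqnorm2 r + lam2 * l1linf G s.

(* ell(d, L) = min_{r,s} \hat ell(d, L, r, s), written as the infimum
   of the values (which is the minimum whenever the minimum exists) *)
Definition ell p k (lam1 lam2 : R) (G : {set {set 'I_p}})
  (d : 'cV[R]_p) (L : 'M[R]_(p, k)) : R :=
  inf [set lhat lam1 lam2 G d L r s | r in [set: 'cV[R]_k] & s in [set: 'cV[R]_p]].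

Definition is_minimizer p k (lam1 lam2 : R) (G : {set {set 'I_p}})
  (d : 'cV[R]_p) (L : 'M[R]_(p, k)) (r : 'cV[R]_k) (s : 'cV[R]_p) : Prop :=
  forall r' s', lhat lam1 lam2 G d L r s <= lhat lam1 lam2 G d L r' s'.

Definition Amat k (rs : nat -> 'cV[R]_k) (t : nat) : 'M[R]_k :=
  \sum_(1 <= i < t.+1) rs i *m (rs i)^T.

Definition Bmat p k (ds ss : nat -> 'cV[R]_p) (rs : nat -> 'cV[R]_k) (t : nat)
  : 'M[R]_(p, k) :=
  \sum_(1 <= i < t.+1) (ds i - ss i) *m (rs i)^T.

Definition surrogate p k (lam1 lam2 : R) (G : {set {set 'I_p}})
  (ds ss : nat -> 'cV[R]_p) (rs : nat -> 'cV[R]_k) (t : nat) (L : 'M[R]_(p, k)) : R :=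
  t%:R^-1 * (\sum_(1 <= i < t.+1) lhat lam1 lam2 G (ds i) L (rs i) (ss i))
  + lam1 / (2 * t%:R) * (frob L) ^+ 2.

Definition olsd p k (lam1 lam2 : R) (G : {set {set 'I_p}})
  (ds : nat -> 'cV[R]_p) (Ls : nat -> 'M[R]_(p, k))
  (rs : nat -> 'cV[R]_k) (ss : nat -> 'cV[R]_p) : Prop :=
  forall t, (1 <= t)%N ->
    is_minimizer lam1 lam2 G (ds t) (Ls t.-1) (rs t) (ss t) /\
    Ls t = Bmat ds ss rs t *m invmx (Amat rs t + lam1%:M).

End OLSD.

From HB Require Import structures.
From mathcomp Require Import all_boot all_order all_algebra.
From mathcomp Require Import all_classical all_reals all_analysis.
From mathcomp Require Import ring lra.
Import Order.TTheory GRing.Theory Num.Theory.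
Import numFieldNormedType.Exports.
Local Open Scope ring_scope.
Local Open Scope classical_set_scope.

Set Implicit Arguments.
Unset Strict Implicit.

(* Comparing a minimizer with (r, s) = (0, 0) gives lhat <= |d|^2 / 2 <= M^2 / 2,
   so its residual is at most |d| and lam1 |r|^2 <= M^2.  Compactness bounds the
   entries of every L in Lset; hence r_t, then s_t = (d_t - L_{t-1} r_t) - residual,
   and finally every residual d_i - L r_i - s_i with L in Lset are bounded
   entrywise, uniformly in i.  L enters g_t only through |d_i - L r_i - s_i|^2 and
   |L|_F^2, whose differences factor entrywise as (a - b)(a + b); with the average
   over i and lam1 / (2 t) <= lam1 / 2 this makes g_t bounded and Lipschitz on Lset
   with constants independent of t. *)

Section MatrixNorms.
Variable R : realType.

Lemma ler_sum_ord_const n (F : 'I_n -> R) c :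
  (forall i, F i <= c) -> \sum_(i < n) F i <= n%:R * c.
Proof.
move=> le_Fc; rewrite mulr_natl -[n in _ *+ n]card_ord -sumr_const.
exact: ler_sum.
Qed.

Lemma entryB m n (A B : 'M[R]_(m, n)) i j : (A - B) i j = A i j - B i j.
Proof. by rewrite !mxE. Qed.

Lemma frob_ge0 m n (A : 'M[R]_(m, n)) : 0 <= frob A.
Proof. exact: sqrtr_ge0. Qed.

Lemma frob_sqrE m n (A : 'M[R]_(m, n)) : frob A ^+ 2 = \sum_i \sum_j A i j ^+ 2.
Proof.
by rewrite sqr_sqrtr // sumr_ge0 // => i _; rewrite sumr_ge0 // => j _; rewrite sqr_ge0.
Qed.

Lemma sqnorm2E n (x : 'cV[R]_n) : sqnorm2 x = frob x ^+ 2.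
Proof. by rewrite frob_sqrE; apply: eq_bigr => i _; rewrite big_ord1. Qed.

Lemma sqnorm2_ge0 n (x : 'cV[R]_n) : 0 <= sqnorm2 x.
Proof. by rewrite sqnorm2E sqr_ge0. Qed.

Lemma sqnorm20 n : sqnorm2 (0 : 'cV[R]_n) = 0.
Proof. by apply: big1 => i _; rewrite mxE expr0n. Qed.

Lemma sqrt_sqnorm2 n (x : 'cV[R]_n) : Num.sqrt (sqnorm2 x) = frob x.
Proof. by rewrite sqnorm2E sqrtr_sqr ger0_norm ?frob_ge0. Qed.

Lemma entry_le_frob m n (A : 'M[R]_(m, n)) i j : `|A i j| <= frob A.
Proof.
rewrite -sqrtr_sqr -[frob A]ger0_norm ?frob_ge0 // -sqrtr_sqr ler_wsqrtr //.
rewrite frob_sqrE (bigD1 i) //= (bigD1 j) //= -addrA lerDl.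
by rewrite addr_ge0 ?sumr_ge0 // => *; rewrite ?sumr_ge0 // => *; rewrite sqr_ge0.
Qed.

Lemma entry_le_sqrt m n (A : 'M[R]_(m, n)) c i j :
  frob A ^+ 2 <= c -> `|A i j| <= Num.sqrt c.
Proof.
move=> le_Ac; apply: le_trans (entry_le_frob A i j) _.
by rewrite -[leLHS]ger0_norm ?frob_ge0 // -sqrtr_sqr ler_wsqrtr.
Qed.

Lemma entry_mulmx_le m n q (A : 'M[R]_(m, n)) (X : 'M[R]_(n, q)) a c i j :
  (forall i j, `|A i j| <= a) -> (forall i j, `|X i j| <= c) ->
  `|(A *m X) i j| <= n%:R * (a * c).
Proof.
move=> le_Aa le_Xc; rewrite mxE; apply: le_trans (ler_norm_sum _ _ _) _.
by apply: ler_sum_ord_const => l; rewrite normrM ler_pM.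
Qed.

Lemma frob_sqr_le m n (A : 'M[R]_(m, n)) b :
  (forall i j, `|A i j| <= b) -> frob A ^+ 2 <= (m * n)%:R * b ^+ 2.
Proof.
move=> le_Ab; rewrite frob_sqrE natrM -mulrA.
apply: ler_sum_ord_const => i; apply: ler_sum_ord_const => j.
by have := le_Ab i j; rewrite ler_norml => /andP[]; nra.
Qed.

Lemma frob_sqr_diff_le m n (A B : 'M[R]_(m, n)) b e :
  (forall i j, `|A i j| <= b) -> (forall i j, `|B i j| <= b) ->
  (forall i j, `|A i j - B i j| <= e) ->
  `|frob A ^+ 2 - frob B ^+ 2| <= (m * n)%:R * (2 * b) * e.
Proof.
move=> le_Ab le_Bb le_ABe; rewrite !frob_sqrE -mulrA [2 * b * e]mulrC natrM -mulrA -sumrB.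
apply: le_trans (ler_norm_sum _ _ _) _; apply: ler_sum_ord_const => i.
rewrite -sumrB; apply: le_trans (ler_norm_sum _ _ _) _.
apply: ler_sum_ord_const => j; rewrite subr_sqr normrM ler_pM //.
by apply: le_trans (ler_normD _ _) _; have := le_Ab i j; have := le_Bb i j; lra.
Qed.

End MatrixNorms.

Section Loss.
Variables (R : realType) (p k : nat) (lam1 lam2 : R) (G : {set {set 'I_p}}).
Hypotheses (lam1_ge0 : 0 <= lam1) (lam2_ge0 : 0 <= lam2).

Lemma l1linf_ge0 (s : 'cV[R]_p) : 0 <= l1linf G s.
Proof.
apply: sumr_ge0 => g _; apply: (big_ind (fun y => 0 <= y)) => // a b a_ge0 b_ge0.
by rewrite le_max a_ge0.
Qed.

Lemma l1linf0 : l1linf G (0 : 'cV[R]_p) = 0.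
Proof.
apply: big1 => g _; apply: (big_ind (fun y => y = 0)) => [|a b -> ->|i _].
- by [].
- by rewrite maxxx.
- by rewrite !mxE; case: ifP; rewrite ?mxE normr0.
Qed.

Lemma lhat_ge0 d (L : 'M[R]_(p, k)) r s : 0 <= lhat lam1 lam2 G d L r s.
Proof.
by rewrite !addr_ge0 ?mulr_ge0 ?divr_ge0 ?sqnorm2_ge0 ?l1linf_ge0.
Qed.

Lemma lhat00 d (L : 'M[R]_(p, k)) : lhat lam1 lam2 G d L 0 0 = 2^-1 * sqnorm2 d.
Proof. by rewrite /lhat mulmx0 !subr0 sqnorm20 l1linf0 !mulr0 !addr0. Qed.

Lemma lhatB d (L1 L2 : 'M[R]_(p, k)) r s :
  lhat lam1 lam2 G d L1 r s - lhat lam1 lam2 G d L2 r s =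
  2^-1 * (sqnorm2 (d - L1 *m r - s) - sqnorm2 (d - L2 *m r - s)).
Proof. by rewrite /lhat; ring. Qed.

Lemma ell_ge0 d (L : 'M[R]_(p, k)) : 0 <= ell lam1 lam2 G d L.
Proof.
apply: lb_le_inf; first by exists (lhat lam1 lam2 G d L 0 0), 0 => //; exists 0.
by move=> _ [r _ [s _ <-]]; apply: lhat_ge0.
Qed.

Lemma ell_le d (L : 'M[R]_(p, k)) : ell lam1 lam2 G d L <= 2^-1 * sqnorm2 d.
Proof.
rewrite -(lhat00 d L); apply: ge_inf; last by exists 0 => //; exists 0.
by exists 0 => _ [r _ [s _ <-]]; apply: lhat_ge0.
Qed.

Section Minimizer.
Variables (d : 'cV[R]_p) (L : 'M[R]_(p, k)) (r : 'cV[R]_k) (s : 'cV[R]_p).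
Hypothesis rs_min : is_minimizer lam1 lam2 G d L r s.

Lemma minimizer_lhat_le : lhat lam1 lam2 G d L r s <= 2^-1 * sqnorm2 d.
Proof. by rewrite -(lhat00 d L); apply: rs_min. Qed.

Lemma minimizer_residual_le : sqnorm2 (d - L *m r - s) <= sqnorm2 d.
Proof.
have := minimizer_lhat_le; rewrite /lhat.
have := mulr_ge0 lam2_ge0 (l1linf_ge0 s).
have := mulr_ge0 (divr_ge0 lam1_ge0 (ler0n R 2)) (sqnorm2_ge0 r); lra.
Qed.

Lemma minimizer_code_le : lam1 * sqnorm2 r <= sqnorm2 d.
Proof.
have := minimizer_lhat_le; rewrite /lhat.
have := mulr_ge0 lam2_ge0 (l1linf_ge0 s).
have := sqnorm2_ge0 (d - L *m r - s); lra.
Qed.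

End Minimizer.
End Loss.

Section Surrogate.
Variables (R : realType) (p k : nat) (lam1 lam2 : R) (G : {set {set 'I_p}}).
Variables (ds ss : nat -> 'cV[R]_p) (rs : nat -> 'cV[R]_k) (t : nat).
Hypotheses (lam1_ge0 : 0 <= lam1) (t_gt0 : (0 < t)%N).

Lemma norm_avg_le (X : nat -> R) (c : R) :
  (forall i, (1 <= i < t.+1)%N -> `|X i| <= c) ->
  `|t%:R^-1 * \sum_(1 <= i < t.+1) X i| <= c.
Proof.
move=> le_Xc; have t_pos : 0 < t%:R :> R by rewrite ltr0n.
rewrite normrM normfV normr_nat mulrC ler_pdivrMr //.
apply: le_trans (ler_norm_sum _ _ _) _; apply: le_trans (ler_sum_nat le_Xc) _.
by rewrite sumr_const_nat subn1 mulr_natr.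
Qed.

Lemma norm_regularizer_le (x b : R) :
  `|x| <= b -> `|lam1 / (2 * t%:R) * x| <= lam1 / 2 * b.
Proof.
move=> le_xb; rewrite invfM mulrA normrM ger0_norm; last first.
  by rewrite !mulr_ge0 ?invr_ge0 ?ler0n.
apply: ler_pM => //; first by rewrite !mulr_ge0 ?invr_ge0 ?ler0n.
by rewrite ler_piMr ?mulr_ge0 ?invr_ge0 // invf_le1 ?ler1n ?ltr0n.
Qed.

Lemma surrogate_norm_le L (c f : R) :
  (forall i, (1 <= i < t.+1)%N ->
     `|lhat lam1 lam2 G (ds i) L (rs i) (ss i)| <= c) ->
  frob L ^+ 2 <= f ->
  `|surrogate lam1 lam2 G ds ss rs t L| <= c + lam1 / 2 * f.
Proof.
move=> le_lhat le_frob; apply: le_trans (ler_normD _ _) _.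
by rewrite lerD ?norm_avg_le ?norm_regularizer_le ?ger0_norm ?sqr_ge0.
Qed.

Lemma surrogateB L1 L2 :
  surrogate lam1 lam2 G ds ss rs t L1 - surrogate lam1 lam2 G ds ss rs t L2 =
  t%:R^-1 * \sum_(1 <= i < t.+1) (lhat lam1 lam2 G (ds i) L1 (rs i) (ss i)
                                 - lhat lam1 lam2 G (ds i) L2 (rs i) (ss i))
  + lam1 / (2 * t%:R) * (frob L1 ^+ 2 - frob L2 ^+ 2).
Proof. by rewrite /surrogate sumrB; ring. Qed.

Lemma surrogate_diff_le L1 L2 (a b : R) :
  (forall i, (1 <= i < t.+1)%N ->
     `|lhat lam1 lam2 G (ds i) L1 (rs i) (ss i)
       - lhat lam1 lam2 G (ds i) L2 (rs i) (ss i)| <= a) ->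
  `|frob L1 ^+ 2 - frob L2 ^+ 2| <= b ->
  `|surrogate lam1 lam2 G ds ss rs t L1 - surrogate lam1 lam2 G ds ss rs t L2|
    <= a + lam1 / 2 * b.
Proof.
move=> le_lhat le_frob; rewrite surrogateB; apply: le_trans (ler_normD _ _) _.
by rewrite lerD ?norm_avg_le ?norm_regularizer_le.
Qed.

End Surrogate.

Lemma compact_entries_bounded (R : realType) m n (S : set 'M[R]_(m, n)) :
  compact S -> exists B, forall A, S A -> forall i j, `|A i j| <= B.
Proof.
move=> /compact_bounded/pinfty_ex_gt0 [B _ le_B]; exists B => A SA i j.
apply: le_trans (le_B A SA); rewrite [leRHS]/Num.Def.normr /= mx_normrE.
by apply/bigmax_geP; right; exists (i, j).
Qed.

Section Iterates.
Variables (R : realType) (p k : nat) (lam1 lam2 M B : R) (G : {set {set 'I_p}}).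
Variables (ds : nat -> 'cV[R]_p) (Ls : nat -> 'M[R]_(p, k)).
Variables (rs : nat -> 'cV[R]_k) (ss : nat -> 'cV[R]_p) (Lset : set 'M[R]_(p, k)).
Hypotheses (lam1_gt0 : 0 < lam1) (lam2_ge0 : 0 <= lam2).
Hypothesis ds_le : forall t, (1 <= t)%N -> Num.sqrt (sqnorm2 (ds t)) <= M.
Hypothesis iterates : olsd lam1 lam2 G ds Ls rs ss.
Hypothesis Lset_le : forall L, Lset L -> forall i j, `|L i j| <= B.
Hypothesis Lset_Ls : forall t, Lset (Ls t).

Let iterate_min i : (1 <= i)%N ->
  is_minimizer lam1 lam2 G (ds i) (Ls i.-1) (rs i) (ss i).
Proof. by move=> i_ge1; have [] := iterates i_ge1. Qed.

Lemma sqnorm2_ds_le i : (1 <= i)%N -> sqnorm2 (ds i) <= M ^+ 2.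
Proof.
move=> i_ge1; have := ds_le i_ge1; rewrite sqrt_sqnorm2 sqnorm2E => le_M.
have M_ge0 : 0 <= M := le_trans (frob_ge0 _) le_M.
by rewrite lerXn2r ?nnegrE ?frob_ge0.
Qed.

Let code_bound := Num.sqrt (M ^+ 2 / lam1).
Let lowrank_bound := M + k%:R * (B * code_bound).
Let residual_bound := lowrank_bound + (lowrank_bound + M).

Lemma rs_entry_le i j l : (1 <= i)%N -> `|rs i j l| <= code_bound.
Proof.
move=> i_ge1; apply: entry_le_sqrt; rewrite -sqnorm2E ler_pdivlMr // mulrC.
exact: le_trans (minimizer_code_le lam2_ge0 (iterate_min i_ge1))
                (sqnorm2_ds_le i_ge1).
Qed.

Lemma lowrank_residual_entry_le i L l : (1 <= i)%N -> Lset L ->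
  `|(ds i - L *m rs i) l ord0| <= lowrank_bound.
Proof.
move=> i_ge1 LL; rewrite entryB; apply: le_trans (ler_normB _ _) _.
apply: lerD.
  by apply: le_trans (entry_le_frob _ _ _) _; rewrite -sqrt_sqnorm2 ds_le.
by apply: entry_mulmx_le => [a b|a b]; [apply: Lset_le | apply: rs_entry_le].
Qed.

Lemma residual_iterate_entry_le i l j : (1 <= i)%N ->
  `|(ds i - Ls i.-1 *m rs i - ss i) l j| <= M.
Proof.
move=> i_ge1; apply: le_trans (entry_le_frob _ _ _) _; apply: le_trans (ds_le i_ge1).
rewrite sqrt_sqnorm2 -(ler_pXn2r (_ : 0 < 2)%N) ?nnegrE ?frob_ge0 // -!sqnorm2E.
exact: (minimizer_residual_le (ltW lam1_gt0) lam2_ge0 (iterate_min i_ge1)).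
Qed.

Lemma ss_entry_le i l : (1 <= i)%N -> `|ss i l ord0| <= lowrank_bound + M.
Proof.
move=> i_ge1; rewrite -[ss i](subKr (ds i - Ls i.-1 *m rs i)) entryB.
apply: le_trans (ler_normB _ _) _.
by rewrite lerD ?lowrank_residual_entry_le ?residual_iterate_entry_le.
Qed.

Lemma residual_entry_le i L l j : (1 <= i)%N -> Lset L ->
  `|(ds i - L *m rs i - ss i) l j| <= residual_bound.
Proof.
move=> i_ge1 LL; rewrite (ord1 j) entryB; apply: le_trans (ler_normB _ _) _.
by rewrite lerD ?lowrank_residual_entry_le ?ss_entry_le.
Qed.

Lemma lhat_iterates_le i L : (1 <= i)%N -> Lset L ->
  `|lhat lam1 lam2 G (ds i) L (rs i) (ss i)|
    <= 2^-1 * (M ^+ 2 + p%:R * residual_bound ^+ 2).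
Proof.
move=> i_ge1 LL; rewrite ger0_norm ?lhat_ge0 ?(ltW lam1_gt0) //.
(* compare with the loss at L_{i-1}, where (r_i, s_i) is a minimizer *)
rewrite -(subrK (lhat lam1 lam2 G (ds i) (Ls i.-1) (rs i) (ss i)) (lhat _ _ _ _ _ _ _)).
rewrite lhatB.
have := minimizer_lhat_le (iterate_min i_ge1); have := sqnorm2_ds_le i_ge1.
have := sqnorm2_ge0 (ds i - Ls i.-1 *m rs i - ss i).
have : sqnorm2 (ds i - L *m rs i - ss i) <= p%:R * residual_bound ^+ 2.
  rewrite sqnorm2E -[p in p%:R]muln1 frob_sqr_le // => a b.
  exact: residual_entry_le.
lra.
Qed.

Let lhat_lip := 2^-1 * (p%:R * (2 * residual_bound) * (k%:R * code_bound)).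

Lemma lhat_iterates_lipschitz i L1 L2 : (1 <= i)%N -> Lset L1 -> Lset L2 ->
  `|lhat lam1 lam2 G (ds i) L1 (rs i) (ss i) - lhat lam1 lam2 G (ds i) L2 (rs i) (ss i)|
    <= lhat_lip * frob (L1 - L2).
Proof.
move=> i_ge1 LL1 LL2.
have -> : lhat_lip * frob (L1 - L2) =
  2^-1 * ((p * 1)%:R * (2 * residual_bound) * (k%:R * (frob (L1 - L2) * code_bound))).
  by rewrite /lhat_lip muln1; ring.
rewrite lhatB normrM ger0_norm // ler_wpM2l // !sqnorm2E.
apply: frob_sqr_diff_le => [a b|a b|a b]; rewrite ?residual_entry_le // -entryB.
have -> : forall d x y s : 'cV[R]_p, d - x - s - (d - y - s) = - (x - y).
  by move=> d x y s; rewrite [RHS]opprB opprB addrA subrK opprB addrC addrA addrNK.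
rewrite -mulmxBl mxE normrN.
apply: entry_mulmx_le => [c e|c e]; first exact: entry_le_frob.
exact: rs_entry_le.
Qed.

End Iterates.

Theorem proposition2 (R : realType) (p k : nat) (lam1 lam2 M : R)
  (G : {set {set 'I_p}})
  (ds : nat -> 'cV[R]_p) (Ls : nat -> 'M[R]_(p, k))
  (rs : nat -> 'cV[R]_k) (ss : nat -> 'cV[R]_p)
  (Lset : set 'M[R]_(p, k)) :
  (0 < p)%N -> (0 < k)%N -> 0 < lam1 -> 0 < lam2 ->
  (forall t, (1 <= t)%N -> Num.sqrt (sqnorm2 (ds t)) <= M) ->
  olsd lam1 lam2 G ds Ls rs ss ->
  compact Lset -> (forall t, Lset (Ls t)) ->
  (* (1) uniform boundedness of \hat ell at minimizers and of ell *)
  (exists C : R, forall t i, (1 <= i)%N ->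
     (forall r s, is_minimizer lam1 lam2 G (ds i) (Ls t) r s ->
        `|lhat lam1 lam2 G (ds i) (Ls t) r s| <= C) /\
     `|ell lam1 lam2 G (ds i) (Ls t)| <= C)
  /\
  (* (2) surrogates g_t uniformly bounded and uniformly Lipschitz on Lset *)
  (exists C K : R, forall t, (1 <= t)%N ->
     (forall L, Lset L -> `|surrogate lam1 lam2 G ds ss rs t L| <= C) /\
     (forall L1 L2, Lset L1 -> Lset L2 ->
        `|surrogate lam1 lam2 G ds ss rs t L1 - surrogate lam1 lam2 G ds ss rs t L2|
          <= K * frob (L1 - L2))).
Proof.
move=> _ _ lam1_gt0 lam2_gt0 ds_le iterates /compact_entries_bounded[B Lset_le] Lset_Ls.
have [lam1_ge0 lam2_ge0] := (ltW lam1_gt0, ltW lam2_gt0).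
split.
  exists (2^-1 * M ^+ 2) => t i i_ge1.
  have half_ds_le : 2^-1 * sqnorm2 (ds i) <= 2^-1 * M ^+ 2.
    by rewrite ler_wpM2l // (sqnorm2_ds_le ds_le).
  split=> [r s rs_min|].
  - rewrite ger0_norm ?lhat_ge0 //.
    exact: le_trans (minimizer_lhat_le rs_min) half_ds_le.
  - by rewrite ger0_norm ?ell_ge0 //; apply: le_trans (ell_le _ _ _ _ _) half_ds_le.
have lhat_le := lhat_iterates_le lam1_gt0 lam2_ge0 ds_le iterates Lset_le Lset_Ls.
have lhat_lipschitz :=
  lhat_iterates_lipschitz lam1_gt0 lam2_ge0 ds_le iterates Lset_le Lset_Ls.
eexists; eexists => t t_ge1; split=> [L LL | L1 L2 LL1 LL2].
- apply: surrogate_norm_le => // [i /andP[i_ge1 _]|]; first exact: lhat_le.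
  exact: frob_sqr_le (Lset_le _ LL).
- apply: le_trans (surrogate_diff_le lam1_ge0 t_ge1 _ _) _.
  + by move=> i /andP[i_ge1 _]; apply: lhat_lipschitz.
  + apply: frob_sqr_diff_le (Lset_le _ LL1) (Lset_le _ LL2) _ => i j.
    by rewrite -entryB; apply: entry_le_frob.
  by rewrite [lam1 / 2 * _]mulrA -mulrDl.
Qed.
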